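(* Let $\bm z\in\mathbb{R}^d$ and $\alpha>1$, and let $\tau^\star=\tau^\star(\alpha)$ be the unique scalar with $\sum_i [(\alpha-1)(z_i-\tau^\star)]_+^{1/(\alpha-1)}=1$, and $p_i^\star=[(\alpha-1)(z_i-\tau^\star)]_+^{1/(\alpha-1)}$. At any $\alpha$ where $\tau^\star$ is differentiable in $\alpha$ and the support $\mathcal S=\{i:p_i^\star>0\}$ is locally constant in $\alpha$, $$\frac{\partial\tau^\star}{\partial\alpha}=\frac{\frac{1}{(\alpha-1)^2}+\frac{\mathsf H^S(\bm p^\star)}{\alpha-1}}{\sum_{i\in\mathcal S}(p_i^\star)^{2-\alpha}},$$ where $\mathsf H^S(\bm p)=-\sum_j p_j\log p_j$ is the Shannon entropy (with $0\log0=0$).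
   Context: Here $[t]_+=\max(t,0)$, and $\bm p^\star$ is exactly the $\alpha$-entmax of $\bm z$, i.e. $\arg\max_{\bm p\in\triangle^d}\bm p^\top\bm z+\frac{1}{\alpha(\alpha-1)}\sum_j(p_j-p_j^\alpha)$, with $\triangle^d=\{\bm p\in\mathbb{R}^d:p_i\ge0,\sum_ip_i=1\}$. *)

From Stdlib Require Import Reals Lra.
Open Scope R_scope.

(* sumR n f = f 0 + ... + f (n-1)  (indices of R^d are 0..d-1) *)
Fixpoint sumR (n : nat) (f : nat -> R) : R :=
  match n with
  | O => 0
  | S m => sumR m f + f m
  end.

(* [t]_+ ^ y, with the convention 0 ^ y = 0 (y > 0 here). *)
Definition pospow (t y : R) : R :=
  if Rlt_dec 0 t then Rpower t y else 0.

Definition pstar (z : nat -> R) (alpha tau : R) (i : nat) : R :=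
  pospow ((alpha - 1) * (z i - tau)) (1 / (alpha - 1)).

Definition shannon (d : nat) (p : nat -> R) : R :=
  - sumR d (fun j => if Rlt_dec 0 (p j) then p j * ln (p j) else 0).

Definition supp_pow_sum (d : nat) (p : nat -> R) (alpha : R) : R :=
  sumR d (fun i => if Rlt_dec 0 (p i) then Rpower (p i) (2 - alpha) else 0).

From Stdlib Require Import Reals Lra.
Open Scope R_scope.

(* Write b = alpha - 1 and p_i(alpha) = [b (z_i - tau(alpha))]_+^{1/b}.  On the
   support S of p(alpha0) the truncation is inactive, and by local constancy of
   the support the smooth function
       F(alpha) = sum_{i in S} (b (z_i - tau(alpha)))^{1/b}
   coincides with sum_i p_i(alpha) = 1 near alpha0, so F'(alpha0) = 0.
   Differentiating each term of F with the rule
       (u^v)' = u^v (v' ln u + v u' / u)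
   gives p_i' = - p_i ln p_i / b + p_i / b^2 - tau' p_i^{2-alpha}, hence
       0 = H(p) / b + 1 / b^2 - tau' sum_{i in S} p_i^{2-alpha},
   which is the claimed formula since the last sum is positive. *)

Lemma sumR_ext (n : nat) (f g : nat -> R) :
  (forall i, (i < n)%nat -> f i = g i) -> sumR n f = sumR n g.
Proof.
  induction n as [|n IH]; simpl; intros Hfg; auto.
  rewrite IH, Hfg; auto.
Qed.

Lemma sumR_plus (n : nat) (f g : nat -> R) :
  sumR n (fun i => f i + g i) = sumR n f + sumR n g.
Proof. induction n as [|n IH]; simpl; [ring | rewrite IH; ring]. Qed.

Lemma sumR_scal (n : nat) (c : R) (f : nat -> R) :
  sumR n (fun i => c * f i) = c * sumR n f.
Proof. induction n as [|n IH]; simpl; [ring | rewrite IH; ring]. Qed.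

Lemma sumR_nonneg (n : nat) (f : nat -> R) :
  (forall i, (i < n)%nat -> 0 <= f i) -> 0 <= sumR n f.
Proof.
  induction n as [|n IH]; simpl; intros Hf; [lra |].
  assert (0 <= f n) by auto.
  assert (0 <= sumR n f) by auto.
  lra.
Qed.

Lemma sumR_pos (n : nat) (f g : nat -> R) :
  (forall i, (i < n)%nat -> 0 <= f i) ->
  (forall i, (i < n)%nat -> 0 <= g i) ->
  (forall i, (i < n)%nat -> 0 < f i -> 0 < g i) ->
  0 < sumR n f -> 0 < sumR n g.
Proof.
  induction n as [|n IH]; simpl; intros Hf Hg Hfg Hsum; [lra |].
  assert (0 <= f n) by auto.
  assert (0 <= g n) by auto.
  assert (0 <= sumR n g) by (apply sumR_nonneg; auto).
  destruct (Rlt_dec 0 (sumR n f)) as [Hpos | Hnpos].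
  - assert (0 < sumR n g) by (apply IH; auto). lra.
  - assert (0 < g n) by (apply Hfg; auto; lra). lra.
Qed.

Lemma derivable_pt_lim_sumR (n : nat) (g : nat -> R -> R) (dg : nat -> R) (x : R) :
  (forall i, (i < n)%nat -> derivable_pt_lim (g i) x (dg i)) ->
  derivable_pt_lim (fun a => sumR n (fun i => g i a)) x (sumR n dg).
Proof.
  induction n as [|n IH]; simpl; intros Hg.
  - apply derivable_pt_lim_const.
  - apply (derivable_pt_lim_plus (fun a => sumR n (fun i => g i a)) (g n)); auto.
Qed.

Lemma derivable_pt_lim_value (f : R -> R) (x l l' : R) :
  derivable_pt_lim f x l -> l = l' -> derivable_pt_lim f x l'.
Proof. intros Hf <-; exact Hf. Qed.

Lemma derivable_pt_lim_locally_const (f : R -> R) (x c delta : R) :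
  0 < delta -> (forall a, Rabs (a - x) < delta -> f a = c) ->
  derivable_pt_lim f x 0.
Proof.
  intros Hdelta Hconst eps Heps.
  exists (mkposreal delta Hdelta); simpl; intros h Hh0 Hh.
  rewrite !Hconst.
  - replace ((c - c) / h - 0) with 0 by (field; auto).
    rewrite Rabs_R0; lra.
  - rewrite Rminus_diag, Rabs_R0; lra.
  - replace (x + h - x) with h by ring; lra.
Qed.

Lemma derivable_pt_lim_Rpower_var (u v : R -> R) (x du dv : R) :
  0 < u x -> derivable_pt_lim u x du -> derivable_pt_lim v x dv ->
  derivable_pt_lim (fun a => Rpower (u a) (v a)) x
    (Rpower (u x) (v x) * (dv * ln (u x) + v x * du / u x)).
Proof.
  intros Hu Hdu Hdv; unfold Rpower.
  pose proof (derivable_pt_lim_comp u ln x du _ Hdu (derivable_pt_lim_ln _ Hu)) as Hln.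
  pose proof (derivable_pt_lim_mult v (comp ln u) x dv _ Hdv Hln) as Hexpo.
  pose proof (derivable_pt_lim_comp _ exp x _ _ Hexpo (derivable_pt_lim_exp _)) as Hexp.
  replace (exp (v x * ln (u x)) * (dv * ln (u x) + v x * du / u x))
    with (exp (v x * ln (u x)) * (dv * ln (u x) + v x * (/ u x * du)))
    by (field; lra).
  exact Hexp.
Qed.

Lemma pstar_nonneg (z : nat -> R) (alpha tau : R) (i : nat) :
  0 <= pstar z alpha tau i.
Proof.
  unfold pstar, pospow; destruct Rlt_dec; [left; apply exp_pos | lra].
Qed.

(* Untruncated coordinate [b (z_i - tau(alpha))]^{1/b}, smooth in alpha on the
   support. *)
Definition raw_coord (z : nat -> R) (tau : R -> R) (i : nat) (alpha : R) : R :=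
  Rpower ((alpha - 1) * (z i - tau alpha)) (1 / (alpha - 1)).

Lemma pstar_pos_raw (z : nat -> R) (tau : R -> R) (alpha : R) (i : nat) :
  0 < pstar z alpha (tau alpha) i ->
  0 < (alpha - 1) * (z i - tau alpha) /\
  pstar z alpha (tau alpha) i = raw_coord z tau i alpha.
Proof. unfold pstar, pospow, raw_coord; destruct Rlt_dec; intros; auto; lra. Qed.

Lemma supp_pow_sum_pos (d : nat) (p : nat -> R) (alpha : R) :
  (forall i, 0 <= p i) -> 0 < sumR d p -> 0 < supp_pow_sum d p alpha.
Proof.
  intros Hp Hsum; unfold supp_pow_sum.
  apply (sumR_pos d p); auto.
  - intros i _; destruct Rlt_dec; [left; apply exp_pos | lra].
  - intros i _ Hpi; destruct Rlt_dec; [apply exp_pos | lra].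
Qed.

Section ThresholdDerivative.

Variables (d : nat) (z : nat -> R) (tau : R -> R) (alpha0 l : R).
Hypothesis alpha0_gt1 : 1 < alpha0.
Hypothesis tau_deriv : derivable_pt_lim tau alpha0 l.

Local Notation P := (pstar z alpha0 (tau alpha0)).

Lemma raw_coord_deriv (i : nat) :
  0 < (alpha0 - 1) * (z i - tau alpha0) ->
  derivable_pt_lim (raw_coord z tau i) alpha0
    (let p := raw_coord z tau i alpha0 in
     - p * ln p / (alpha0 - 1) + p / (alpha0 - 1) ^ 2 - l * Rpower p (2 - alpha0)).
Proof.
  intros Hu.
  assert (Hb : alpha0 - 1 <> 0) by lra.
  assert (Hshift : derivable_pt_lim (fun a => a - 1) alpha0 (1 - 0)).
  { apply (derivable_pt_lim_minus id (fct_cte 1)).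
    - apply derivable_pt_lim_id.
    - apply derivable_pt_lim_const. }
  assert (Hgap : derivable_pt_lim (fun a => z i - tau a) alpha0 (0 - l)).
  { apply (derivable_pt_lim_minus (fct_cte (z i)) tau); auto.
    apply derivable_pt_lim_const. }
  assert (Hbase : derivable_pt_lim (fun a => (a - 1) * (z i - tau a)) alpha0
                    ((1 - 0) * (z i - tau alpha0) + (alpha0 - 1) * (0 - l)))
    by exact (derivable_pt_lim_mult _ _ _ _ _ Hshift Hgap).
  assert (Hexpo : derivable_pt_lim (fun a => 1 / (a - 1)) alpha0
                    ((0 * (alpha0 - 1) - (1 - 0) * 1) / Rsqr (alpha0 - 1)))
    by exact (derivable_pt_lim_div (fct_cte 1) (fun a => a - 1) alpha0 0 (1 - 0)
                (derivable_pt_lim_const 1 alpha0) Hshift Hb).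
  pose proof (derivable_pt_lim_Rpower_var _ _ _ _ _ Hu Hbase Hexpo) as Hpow.
  unfold raw_coord; cbv beta in Hpow |- *.
  set (u := (alpha0 - 1) * (z i - tau alpha0)) in *.
  set (p := Rpower u (1 / (alpha0 - 1))) in *.
  assert (Hln : ln p = 1 / (alpha0 - 1) * ln u) by apply ln_Rpower.
  assert (Hpow2 : Rpower p (2 - alpha0) = p / u).
  { unfold p; rewrite Rpower_mult.
    replace (1 / (alpha0 - 1) * (2 - alpha0)) with (1 / (alpha0 - 1) + - (1))
      by (field; lra).
    rewrite Rpower_plus, Rpower_Ropp, Rpower_1; auto. }
  rewrite Hln, Hpow2.
  apply (derivable_pt_lim_value _ _ _ _ Hpow).
  assert (Hgap_pos : 0 < z i - tau alpha0) by (unfold u in Hu; nra).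
  unfold Rsqr, u; field; split; lra.
Qed.

Definition support_sum (alpha : R) : R :=
  sumR d (fun i => if Rlt_dec 0 (P i) then raw_coord z tau i alpha else 0).

Lemma support_sum_deriv :
  derivable_pt_lim support_sum alpha0
    (shannon d P / (alpha0 - 1) + sumR d P / (alpha0 - 1) ^ 2
     - l * supp_pow_sum d P alpha0).
Proof.
  set (dg := fun i => if Rlt_dec 0 (P i)
               then - P i * ln (P i) / (alpha0 - 1) + P i / (alpha0 - 1) ^ 2
                    - l * Rpower (P i) (2 - alpha0)
               else 0).
  assert (Hterms : derivable_pt_lim support_sum alpha0 (sumR d dg)).
  { apply derivable_pt_lim_sumR; intros i _; unfold dg.
    destruct Rlt_dec as [Hpi | _]; [| apply derivable_pt_lim_const].
    destruct (pstar_pos_raw z tau alpha0 i Hpi) as [Hu ->].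
    exact (raw_coord_deriv i Hu). }
  apply (derivable_pt_lim_value _ _ _ _ Hterms).
  transitivity (sumR d (fun i =>
      (-1 / (alpha0 - 1)) * (if Rlt_dec 0 (P i) then P i * ln (P i) else 0)
      + (1 / (alpha0 - 1) ^ 2) * P i
      + (- l) * (if Rlt_dec 0 (P i) then Rpower (P i) (2 - alpha0) else 0))).
  - apply sumR_ext; intros i _; unfold dg.
    destruct Rlt_dec as [Hpi | Hpi].
    + field; lra.
    + assert (P i = 0) as -> by (pose proof (pstar_nonneg z alpha0 (tau alpha0) i); lra).
      ring.
  - rewrite !sumR_plus, !sumR_scal; unfold shannon, supp_pow_sum; field; lra.
Qed.

Hypothesis normalized :
  forall alpha, 1 < alpha -> sumR d (pstar z alpha (tau alpha)) = 1.
Hypothesis support_locally_constant :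
  exists delta, 0 < delta /\
    forall alpha, 1 < alpha -> Rabs (alpha - alpha0) < delta ->
      forall i, (i < d)%nat ->
        (0 < pstar z alpha (tau alpha) i <-> 0 < P i).

(* Near alpha0, F(alpha) is the full normalization sum, hence equals 1. *)
Lemma support_sum_locally_one :
  exists delta, 0 < delta /\
    forall alpha, Rabs (alpha - alpha0) < delta -> support_sum alpha = 1.
Proof.
  destruct support_locally_constant as [delta [Hdelta Hsupp]].
  exists (Rmin delta (alpha0 - 1)); split; [apply Rmin_pos; lra |].
  intros alpha Hclose.
  pose proof (Rmin_l delta (alpha0 - 1)); pose proof (Rmin_r delta (alpha0 - 1)).
  assert (Halpha : 1 < alpha) by (apply Rabs_def2 in Hclose; lra).
  rewrite <- (normalized alpha Halpha); unfold support_sum.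
  apply sumR_ext; intros i Hi.
  pose proof (Hsupp alpha Halpha ltac:(lra) i Hi) as Hiff.
  destruct Rlt_dec as [HPi | HPi].
  - symmetry; apply (pstar_pos_raw z tau alpha i), Hiff, HPi.
  - pose proof (pstar_nonneg z alpha (tau alpha) i).
    assert (~ 0 < pstar z alpha (tau alpha) i) by tauto.
    lra.
Qed.

Lemma support_sum_deriv_zero : derivable_pt_lim support_sum alpha0 0.
Proof.
  destruct support_sum_locally_one as [delta [Hdelta Hone]].
  exact (derivable_pt_lim_locally_const support_sum alpha0 1 delta Hdelta Hone).
Qed.

End ThresholdDerivative.

Theorem mainTheorem2 (d : nat) (z : nat -> R) (tau : R -> R) (alpha0 l : R) :
  (forall alpha, 1 < alpha -> sumR d (pstar z alpha (tau alpha)) = 1) ->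
  1 < alpha0 ->
  derivable_pt_lim tau alpha0 l ->
  (exists delta, 0 < delta /\
     forall alpha, 1 < alpha -> Rabs (alpha - alpha0) < delta ->
       forall i, (i < d)%nat ->
         (0 < pstar z alpha (tau alpha) i <-> 0 < pstar z alpha0 (tau alpha0) i)) ->
  l = (1 / (alpha0 - 1) ^ 2
        + shannon d (pstar z alpha0 (tau alpha0)) / (alpha0 - 1))
      / supp_pow_sum d (pstar z alpha0 (tau alpha0)) alpha0.
Proof.
  intros Hnorm Halpha0 Hderiv Hsupp.
  set (P := pstar z alpha0 (tau alpha0)).
  assert (HP1 : sumR d P = 1) by (apply Hnorm; exact Halpha0).
  assert (HS : 0 < supp_pow_sum d P alpha0).
  { apply supp_pow_sum_pos; [apply pstar_nonneg | lra]. }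
  (* Two computations of F'(alpha0) agree: 0 = H/b + 1/b^2 - l S. *)
  pose proof (uniqueness_limite _ _ _ _
    (support_sum_deriv d z tau alpha0 l Halpha0 Hderiv)
    (support_sum_deriv_zero d z tau alpha0 Halpha0 Hnorm Hsupp)) as Hzero.
  fold P in Hzero; rewrite HP1 in Hzero.
  assert (Hslope : l * supp_pow_sum d P alpha0
                  = 1 / (alpha0 - 1) ^ 2 + shannon d P / (alpha0 - 1)) by lra.
  rewrite <- Hslope; field; lra.
Qed.
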